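(* Let $b>0$ and $N_{\rm r}\ge 1$, and let $x_1,\dots,x_{N_{\rm r}}\in\mathbb{C}$ be inputs satisfying $|\Re(x_k)|\le b$ and $|\Im(x_k)|\le b$ for all $k$. Define the first-order 1-bit spatial sigma-delta recursion with zero feedback phase shift (steering angle $\psi=0$) by $e_0=0$ and, for $n=1,\dots,N_{\rm r}$, $$r_n = x_n - e_{n-1},\qquad y_n=\mathcal{Q}_b[r_n],\qquad e_n = y_n - r_n,$$ where $\mathcal{Q}_b[u]=b\,\mathrm{sign}(\Re(u))+\jmath\, b\,\mathrm{sign}(\Im(u))$. Then for every $n=1,\dots,N_{\rm r}$, $$\Re(e_n) = b - 2b\left\langle \tfrac{1}{2}(n-1) + \tfrac{1}{2b}\sum_{k=1}^{n}\Re(x_k)\right\rangle,\qquad \Im(e_n) = b - 2b\left\langle \tfrac{1}{2}(n-1) + \tfrac{1}{2b}\sum_{k=1}^{n}\Im(x_k)\right\rangle,$$ where $\langle u\rangle = u-\lfloor u\rfloor$ denotes the fractional part of a real number $u$.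
   Context: $\jmath=\sqrt{-1}$. The function $\mathrm{sign}:\mathbb{R}\to\{-1,1\}$ is taken with the convention $\mathrm{sign}(u)=1$ for $u\ge 0$ and $\mathrm{sign}(u)=-1$ for $u<0$. In the paper the inputs $x_n$ are the antenna signals after an amplitude clipper with clipping level $c$; for steering angle $\psi=0$ the paper's overload condition $c=b(2-|\cos\varphi|-|\sin\varphi|)$ with $\varphi=0$ gives $c=b$, so the (clipped) inputs have real and imaginary parts bounded in absolute value by $b$. The quantity $e_n$ is the quantization error of channel (antenna) $n$, fed back to the input of channel $n+1$. *)

From Stdlib Require Import Reals Lra.
From Coquelicot Require Import Coquelicot.
Open Scope R_scope.

Definition sgn (u : R) : R := if Rle_dec 0 u then 1 else -1.

Definition Qb (b : R) (u : C) : C := (b * sgn (Re u), b * sgn (Im u)).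

(* Quantization error e_n of the first-order spatial sigma-delta recursion
   with psi = 0:  e_0 = 0, r_n = x_n - e_{n-1}, y_n = Q_b[r_n], e_n = y_n - r_n.
   Inputs are indexed x 1, x 2, ..., x N_r. *)
Fixpoint sd_err (b : R) (x : nat -> C) (n : nat) : C :=
  match n with
  | O => 0%C
  | S m =>
      let r := (x (S m) - sd_err b x m)%C in
      let y := Qb b r in
      (y - r)%C
  end.

Definition fracp (u : R) : R := u - IZR (Int_part u).

From Stdlib Require Import Reals Lra Lia.
From Coquelicot Require Import Coquelicot.
Open Scope R_scope.

(* Both components follow the same scalar recursion.  Write the error as
   e_n = b - 2b f_n.  The next quantizer input is r = 2b (g - 1) with
   g = f_n + 1/2 + a_{n+1}/(2b), and |a_{n+1}| <= b puts g in [0, 2); the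
   1-bit quantizer then subtracts exactly the integer part of g, so
   f_{n+1} = <g>.  Hence f_n is the fractional part of the running sum of the
   increments 1/2 + a_k/(2b), started at f_0 = 1/2. *)

Fixpoint sd_err_scalar (b : R) (a : nat -> R) (n : nat) : R :=
  match n with
  | O => 0
  | S m => let r := a (S m) - sd_err_scalar b a m in b * sgn r - r
  end.

Lemma Re_sd_err (b : R) (x : nat -> C) (n : nat) :
  Re (sd_err b x n) = sd_err_scalar b (fun k => Re (x k)) n.
Proof.
  induction n as [|m IH]; [reflexivity|].
  change (Re (sd_err b x (S m)))
    with (b * sgn (Re (x (S m)) - Re (sd_err b x m))
          - (Re (x (S m)) - Re (sd_err b x m))).
  now rewrite IH.
Qed.

Lemma Im_sd_err (b : R) (x : nat -> C) (n : nat) :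
  Im (sd_err b x n) = sd_err_scalar b (fun k => Im (x k)) n.
Proof.
  induction n as [|m IH]; [reflexivity|].
  change (Im (sd_err b x (S m)))
    with (b * sgn (Im (x (S m)) - Im (sd_err b x m))
          - (Im (x (S m)) - Im (sd_err b x m))).
  now rewrite IH.
Qed.

Lemma fracp_unique (u : R) (z : Z) :
  IZR z <= u < IZR z + 1 -> fracp u = u - IZR z.
Proof.
  intros [Hlo Hhi]. unfold fracp, Int_part.
  assert (Hup : (z + 1)%Z = up u) by (apply tech_up; rewrite plus_IZR; lra).
  rewrite <- Hup, minus_IZR, plus_IZR. lra.
Qed.

Lemma fracp_range (u : R) : 0 <= fracp u < 1.
Proof. unfold fracp. destruct (base_Int_part u). lra. Qed.

Lemma fracp_add_fracpl (u v : R) : fracp (u + v) = fracp (fracp u + v).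
Proof.
  destruct (fracp_range (fracp u + v)) as [Hlo Hhi].
  rewrite (fracp_unique (u + v) (Int_part (fracp u + v) + Int_part u)).
  - unfold fracp. rewrite plus_IZR. lra.
  - unfold fracp in Hlo, Hhi |- *. rewrite plus_IZR. lra.
Qed.

Lemma quantizer_error_fracp (b g : R) :
  0 < b -> 0 <= g < 2 ->
  b * sgn (2 * b * (g - 1)) - 2 * b * (g - 1) = b - 2 * b * fracp g.
Proof.
  intros Hb Hg. unfold sgn.
  destruct (Rle_dec 0 (2 * b * (g - 1))) as [Hr|Hr].
  - assert (1 <= g) by nra.
    rewrite (fracp_unique g 1); [lra|simpl; lra].
  - assert (g < 1) by nra.
    rewrite (fracp_unique g 0); [lra|simpl; lra].
Qed.

Lemma sd_err_scalar_fracp (b : R) (Nr : nat) (a : nat -> R) :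
  0 < b -> (forall k : nat, (1 <= k <= Nr)%nat -> Rabs (a k) <= b) ->
  forall n : nat, (n <= Nr)%nat ->
    sd_err_scalar b a n
      = b - 2 * b * fracp (/ 2 * (INR n - 1) + / (2 * b) * sum_n_m a 1 n).
Proof.
  intros Hb Ha n. induction n as [|m IH]; intros Hn.
  - rewrite sum_n_m_zero by lia. unfold zero; simpl.
    rewrite (fracp_unique _ (-1)); simpl; lra.
  - set (s := / 2 * (INR m - 1) + / (2 * b) * sum_n_m a 1 m) in IH.
    set (g := fracp s + / 2 + a (S m) / (2 * b)).
    assert (Hg : 0 <= g < 2).
    { destruct (fracp_range s).
      assert (Ha' := proj1 (Rabs_le_between _ _) (Ha (S m) ltac:(lia))).
      assert (-/2 <= a (S m) / (2 * b) <= /2).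
      { split; apply (Rmult_le_reg_l (2 * b)); try field_simplify; lra. }
      unfold g; lra. }
    assert (Hsum : / 2 * (INR (S m) - 1) + / (2 * b) * sum_n_m a 1 (S m)
                   = s + (/ 2 + a (S m) / (2 * b))).
    { rewrite sum_n_Sm, S_INR by lia. unfold s, plus; simpl. field. lra. }
    rewrite Hsum, fracp_add_fracpl.
    replace (fracp s + (/ 2 + a (S m) / (2 * b))) with g by (unfold g; ring).
    rewrite <- quantizer_error_fracp by assumption.
    simpl. rewrite IH by lia.
    replace (a (S m) - (b - 2 * b * fracp s)) with (2 * b * (g - 1))
      by (unfold g; field; lra).
    reflexivity.
Qed.

Theorem lemma1 (b : R) (Nr : nat) (x : nat -> C) :
  0 < b -> (1 <= Nr)%nat ->
  (forall k : nat, (1 <= k <= Nr)%nat ->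
     Rabs (Re (x k)) <= b /\ Rabs (Im (x k)) <= b) ->
  forall n : nat, (1 <= n <= Nr)%nat ->
    Re (sd_err b x n)
      = b - 2 * b * fracp (/ 2 * (INR n - 1)
                           + / (2 * b) * sum_n_m (fun k => Re (x k)) 1 n) /\
    Im (sd_err b x n)
      = b - 2 * b * fracp (/ 2 * (INR n - 1)
                           + / (2 * b) * sum_n_m (fun k => Im (x k)) 1 n).
Proof.
  intros Hb _ Hx n Hn.
  rewrite Re_sd_err, Im_sd_err.
  split; apply (sd_err_scalar_fracp b Nr); try assumption; try lia;
    intros k Hk; apply (Hx k Hk).
Qed.
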